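(* Let $\mathbb{M}_1=(X,\mathcal{I}_1)$, $\mathbb{M}_2=(X,\mathcal{I}_2)$ be matroids on a finite set $X$, let $B$ be a common basis, let $\delta\ge0$, and let $A_1,A_2$ be the arc sets of the exchange graph of $B$ (see context). For a weight function $w':X\to\mathbb{R}_{\ge0}$, define arc lengths $l_{xy}=w'(x)$ for $(x,y)\in A_1$ and $l_{yx}=-w'(y)$ for $(y,x)\in A_2$. Then $B$ is $\delta$-optimal under $w'$ (i.e. $w'(B)\ge w'(B')+\delta$ for every common basis $B'\ne B$) if and only if there exist real numbers $d_{xy}$, $x,y\in X$, such that $d_{xy}\le l_{xy}$ for all $(x,y)\in A_1\cup A_2$, $d_{xz}\le d_{xy}+l_{yz}$ for all $x,z\in X$ and all $(y,z)\in A_1\cup A_2$, and $d_{xx}\ge\delta$ for all $x\in X$. Consequently, the problem of finding $w'$ minimizing $\sum_{e\in X}(w'(e)-w(e))^2$ such that $B$ is $\delta$-optimal under $w'$ is equivalent to a quadratic program with linear constraints in the variables $w'$, $l$, $d$.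
   Context: $w'(S)=\sum_{x\in S}w'(x)$. The exchange graph of $B$ has vertex set $X$ and arcs $A_1=\{(x,y): x\in B,\ y\in X\setminus B,\ B-\{x\}+\{y\}\in\mathcal{I}_1\}$ and $A_2=\{(y,x): x\in B,\ y\in X\setminus B,\ B-\{x\}+\{y\}\in\mathcal{I}_2\}$. *)

From HB Require Import structures.
From mathcomp Require Import all_boot all_order all_algebra.
Set Implicit Arguments. Unset Strict Implicit. Unset Printing Implicit Defensive.
Import Order.TTheory GRing.Theory Num.Theory.
Local Open Scope ring_scope.

Definition is_matroid (T : finType) (I : pred {set T}) : Prop :=
  [/\ I set0,
      (forall A B : {set T}, B \subset A -> I A -> I B) &
      (forall A B : {set T}, I A -> I B -> #|A| < #|B| ->
         exists2 x, x \in B :\: A & I (x |: A))]%N.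

Definition is_basis (T : finType) (I : pred {set T}) (B : {set T}) : bool :=
  maxset I B.

Definition common_basis (T : finType) (I1 I2 : pred {set T}) (B : {set T}) : bool :=
  is_basis I1 B && is_basis I2 B.

Definition arcA1 (T : finType) (I1 : pred {set T}) (B : {set T}) (x y : T) : bool :=
  [&& x \in B, y \notin B & I1 (y |: (B :\ x))].
Definition arcA2 (T : finType) (I2 : pred {set T}) (B : {set T}) (y x : T) : bool :=
  [&& x \in B, y \notin B & I2 (y |: (B :\ x))].

Definition is_arc (T : finType) (I1 I2 : pred {set T}) (B : {set T}) (a b : T) : bool :=
  arcA1 I1 B a b || arcA2 I2 B a b.

Definition wset (R : numDomainType) (T : finType) (w : T -> R) (S : {set T}) : R :=
  \sum_(x in S) w x.

(* arc length: l_xy = w'(x) on A1, l_yx = -w'(y) on A2 (the two arc sets are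
   disjoint); value off the arcs is irrelevant. *)
Definition arc_len (R : numDomainType) (T : finType) (I1 I2 : pred {set T})
  (B : {set T}) (w : T -> R) (a b : T) : R :=
  if arcA1 I1 B a b then w a else if arcA2 I2 B a b then - w a else 0.

Definition delta_optimal (R : numDomainType) (T : finType) (I1 I2 : pred {set T})
  (B : {set T}) (delta : R) (w : T -> R) : Prop :=
  forall B' : {set T}, common_basis I1 I2 B' -> B' != B ->
    wset w B' + delta <= wset w B.

(* Sufficiency: fix x0 in B :\: B'.  The potential q = d x0 (with q x0 = 0)
   splits w into w1 + w2 such that no single exchange of B increases w1 in M1
   or w2 in M2, and an exchange in M2 that removes x0 decreases w2 by at least
   delta.  Comparing B with B' in both matroids gives w(B') + delta <= w(B).
   Necessity: every closed walk has length >= delta.  Otherwise take one with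
   fewest arcs; all its chords close shorter, hence heavy, cycles.  This makes
   it a simple cycle whose exchange pairs, ordered by prefix lengths, form a
   unique matching in both matroids, so B with the cycle swapped is a common
   basis of weight w(B) - length > w(B) - delta.  Without light closed walks
   shortest walk lengths exist and provide d. *)

From HB Require Import structures.
From mathcomp Require Import all_boot all_order all_algebra.
From mathcomp Require Import lra zify.
Import Order.TTheory GRing.Theory Num.Theory.
Set Implicit Arguments. Unset Strict Implicit. Unset Printing Implicit Defensive.

(** * Exchange properties of matroids *)

Section Matroid.
Variables (T : finType) (I : pred {set T}).
Hypothesis matroidI : is_matroid I.

Lemma indep_sub (A B : {set T}) : B \subset A -> I A -> I B.
Proof. by case: matroidI => _ subI _; apply: subI. Qed.

Lemma indep_aug (A B : {set T}) : I A -> I B -> #|A| < #|B| ->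
  exists2 x, x \in B :\: A & I (x |: A).
Proof. by case: matroidI => _ _ augI; apply: augI. Qed.

Lemma indep_card_leq_basis (B S : {set T}) : maxset I B -> I S -> #|S| <= #|B|.
Proof.
move=> maxB IS; rewrite leqNgt; apply/negP=> ltBS.
have [x /setDP[_ xB] IxB] := indep_aug (maxsetp maxB) IS ltBS.
by move: xB; rewrite -(maxsetsup maxB IxB (subsetUr _ _)) setU11.
Qed.

Lemma basis_card (B B' : {set T}) : maxset I B -> maxset I B' -> #|B| = #|B'|.
Proof.
move=> maxB maxB'; apply/eqP; rewrite eqn_leq.
by rewrite (indep_card_leq_basis maxB (maxsetp maxB'))
           (indep_card_leq_basis maxB' (maxsetp maxB)).
Qed.

Lemma indep_card_basis (B S : {set T}) : maxset I B -> I S -> #|S| = #|B| -> maxset I S.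
Proof.
move=> maxB IS cardS; apply/maxsetP; split=> // S' IS' subS.
apply/eqP; rewrite eq_sym eqEcard subS cardS.
exact: indep_card_leq_basis.
Qed.

Lemma indep_extend (A C : {set T}) : I A -> I C -> #|A| <= #|C| ->
  exists A' : {set T}, [/\ A \subset A', A' \subset A :|: C, I A' & #|A'| = #|C|].
Proof.
move Hk : (#|C| - #|A|) => k; elim: k A Hk => [|k IHk] A Hk IA IC leAC.
  by exists A; rewrite subsetUl; split=> //; apply/eqP; rewrite eqn_leq leAC -subn_eq0 Hk.
have ltAC : #|A| < #|C| by rewrite -subn_gt0 Hk.
have [x /setDP[xC xA] IxA] := indep_aug IA IC ltAC.
have cardxA : #|x |: A| = #|A|.+1 by rewrite cardsU1 xA.
have [||A' [subA' subA'C IA' cardA']] := IHk (x |: A) _ IxA IC.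
- by rewrite cardxA subnS Hk.
- by rewrite cardxA.
exists A'; split=> //; first exact: subset_trans (subsetUr _ _) subA'.
apply: subset_trans subA'C _.
by rewrite !subUset sub1set inE xC orbT subsetUl subsetUr.
Qed.

Lemma basis_exchange (B1 B2 : {set T}) x : maxset I B1 -> maxset I B2 ->
  x \in B1 :\: B2 -> exists2 y, y \in B2 :\: B1 & I (x |: (B2 :\ y)).
Proof.
move=> maxB1 maxB2 /setDP[xB1 xB2].
set A := x |: (B1 :&: B2).
have subAB1 : A \subset B1 by rewrite subUset sub1set xB1 subsetIl.
have leAB2 : #|A| <= #|B2| by rewrite -(basis_card maxB1 maxB2) subset_leq_card.
have [A' [subAA' subA' IA' cardA']] :=
  indep_extend (indep_sub subAB1 (maxsetp maxB1)) (maxsetp maxB2) leAB2.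
have subA'xB2 : A' \subset x |: B2.
  apply: subset_trans subA' _.
  by rewrite !subUset sub1set setU11 subsetUr (subset_trans (subsetIr _ _) (subsetUr _ _)).
have /cards1P[y defY] : #|(x |: B2) :\: A'| == 1.
  by rewrite cardsDS // cardsU1 xB2 cardA' subSnn.
have defA' : A' = (x |: B2) :\ y.
  by rewrite -defY setDDr setDv set0U (setIidPr subA'xB2).
have xA' : x \in A' by rewrite (subsetP subAA') ?setU11.
have /setDP[/setU1P[yx | yB2] yA'] : y \in (x |: B2) :\: A' by rewrite defY set11.
  by rewrite yx xA' in yA'.
have yB1 : y \notin B1.
  by apply: contra yA' => yB1; rewrite (subsetP subAA') // !inE yB1 yB2 orbT.
exists y; first by rewrite inE yB1.
have xy : x != y by apply: contraNneq yA' => <-.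
congr (I _): IA'; rewrite defA'; apply/setP=> z; rewrite !inE.
by case: (eqVneq z x) => [->|]; rewrite ?xy.
Qed.

Section ExchangeAfterExchange.
Variables (B : {set T}) (x0 y0 x y : T).
Hypotheses (IB : I B) (x0B : x0 \in B) (xB : x \in B) (xx0 : x != x0)
  (y0B : y0 \notin B) (yB : y \notin B)
  (Iy0x0 : I (y0 |: (B :\ x0))) (NIyx0 : ~~ I (y |: (B :\ x0))).

Let E := y |: (B :\ x0 :\ x).

Let xE : x |: E = y |: (B :\ x0).
Proof. by rewrite /E setUCA setD1K // !inE xx0. Qed.

Let x0E : x0 |: E = y |: (B :\ x).
Proof.
rewrite /E setUCA; congr (_ |: _); apply/setP=> z; rewrite !inE.
by case: (eqVneq z x0) => [->|] //=; rewrite x0B eq_sym xx0.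
Qed.

Let y0E : y0 |: E = y |: ((y0 |: (B :\ x0)) :\ x).
Proof.
rewrite /E setUCA; congr (_ |: _); apply/setP=> z; rewrite !inE.
have y0x : y0 != x by apply: contraNneq y0B => ->.
by case: (eqVneq z y0) => [->|] //=; rewrite y0x.
Qed.

Let cardE : #|E|.+1 = #|B|.
Proof.
rewrite /E cardsU1 !inE (negbTE yB) !andbF.
by rewrite (cardsD1 x0 B) (cardsD1 x (B :\ x0)) x0B !inE xx0 xB.
Qed.

Let notin_E e : e \in B -> e \notin E -> (e == x) || (e == x0).
Proof.
move=> eB; rewrite !inE eB andbT negb_or => /andP[_].
by rewrite negb_and !negbK orbC.
Qed.

Lemma indep_exchange_after_exchange :
  I (y |: ((y0 |: (B :\ x0)) :\ x)) = I (y |: (B :\ x)).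
Proof.
apply/idP/idP=> [Iy0 | Iy].
- have IE : I E by apply: indep_sub Iy0; rewrite -y0E subsetUr.
  have ltEB : #|E| < #|B| by rewrite -cardE.
  have [e /setDP[eB eE] IeE] := indep_aug IE IB ltEB.
  case/orP: (notin_E eB eE) => /eqP ee; last by rewrite -x0E -ee.
  by move: NIyx0; rewrite -xE -ee IeE.
- have IE : I E by apply: indep_sub Iy; rewrite -x0E subsetUr.
  have ltE : #|E| < #|y0 |: (B :\ x0)|.
    have cardBx0 : #|B :\ x0|.+1 = #|B| by rewrite (cardsD1 x0 B) x0B.
    by rewrite cardsU1 !inE (negbTE y0B) andbF add1n cardBx0 -cardE.
  have [e /setDP[/setU1P[-> | /setD1P[ex0 eB]] eE] IeE] := indep_aug IE Iy0x0 ltE.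
    by rewrite -y0E.
  case/orP: (notin_E eB eE) => /eqP ee; last by rewrite ee eqxx in ex0.
  by move: NIyx0; rewrite -xE -ee IeE.
Qed.

End ExchangeAfterExchange.

(* The unique-matching lemma (Krogdahl; Schrijver, Cor. 39.13a). *)
Lemma indep_unique_matching (K : finType) disp (U : orderType disp) (key : K -> U)
    (x y : K -> T) (J : {set K}) (B : {set T}) :
  I B -> {in J, forall j, x j \in B} -> {in J, forall j, y j \notin B} ->
  {in J &, injective x} -> {in J &, injective y} ->
  {in J, forall j, I (y j |: (B :\ x j))} ->
  {in J &, forall i j, i != j -> I (y j |: (B :\ x i)) -> (key j < key i)%O} ->
  I ((B :\: x @: J) :|: y @: J).
Proof.
move cJ : #|J| => n; elim: n J B cJ => [|n IHn] J B cJ IB xB yB xinj yinj Ixy chord.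
  by move/eqP: cJ; rewrite cards_eq0 => /eqP ->; rewrite !imset0 setD0 setU0.
have [a0 a0J] : exists a0, a0 \in J by apply/set0Pn; rewrite -card_gt0 cJ.
have [a aJ amin] := arg_minP key a0J; have {}aJ : a \in J := aJ.
set J' := J :\ a; set B' := y a |: (B :\ x a).
have J'J j : j \in J' -> j \in J by case/setD1P.
have J'a j : j \in J' -> j != a by case/setD1P.
have xJ'a j : j \in J' -> x j != x a.
  by move=> jJ'; apply: contra (J'a j jJ') => /eqP/xinj-> //; apply: J'J.
have yJ'a j : j \in J' -> y j != y a.
  by move=> jJ'; apply: contra (J'a j jJ') => /eqP/yinj-> //; apply: J'J.
have NIa j : j \in J' -> ~~ I (y j |: (B :\ x a)).
  move=> jJ'; apply: contraL (amin j (J'J j jJ')) => Ija; rewrite -ltNge.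
  by apply: chord => //; [apply: J'J | rewrite eq_sym J'a].
have ->: (B :\: x @: J) :|: y @: J = (B' :\: x @: J') :|: y @: J'.
  have yaJ' : y a \notin x @: J'.
    by apply/imsetP=> -[j jJ' yax]; move: (yB a aJ); rewrite yax xB ?J'J.
  rewrite -(setD1K aJ) !imsetU1 -/J'; apply/setP=> z; rewrite !inE.
  case: (eqVneq z (y a)) => [->|_] /=; first by rewrite yaJ' orbT.
  by rewrite negb_or; case: (z \in x @: J'); case: (z == x a).
have swap i j : i \in J' -> j \in J' ->
    I (y j |: (B' :\ x i)) = I (y j |: (B :\ x i)).
  move=> iJ' jJ'; have [iJ jJ] := (J'J i iJ', J'J j jJ').
  by apply: indep_exchange_after_exchange; rewrite ?xB ?yB ?xJ'a ?Ixy ?NIa.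
apply: IHn.
- by move: cJ; rewrite (cardsD1 a J) aJ => -[].
- exact: Ixy.
- by move=> j jJ'; rewrite !inE xJ'a // xB ?J'J ?orbT.
- by move=> j jJ'; rewrite !inE negb_or yJ'a // (negbTE (yB j (J'J j jJ'))) andbF.
- by move=> i j iJ' jJ'; apply: xinj; apply: J'J.
- by move=> i j iJ' jJ'; apply: yinj; apply: J'J.
- by move=> j jJ'; rewrite swap // Ixy ?J'J.
- by move=> i j iJ' jJ' ij; rewrite swap //; apply: chord; rewrite ?J'J.
Qed.

End Matroid.

Local Open Scope ring_scope.

Section MatroidWeight.
Variables (T : finType) (I : pred {set T}) (R : realDomainType).
Hypothesis matroidI : is_matroid I.

Lemma basis_sum_le_exchange (u s : T -> R) (B B' : {set T}) :
  maxset I B -> maxset I B' ->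
  (forall x y, x \in B -> y \notin B -> I (y |: (B :\ x)) -> u y + s x <= u x) ->
  \sum_(z in B') u z + \sum_(z in B :\: B') s z <= \sum_(z in B) u z.
Proof.
move=> maxB + exB; move kB : #|B :\: B'| => k.
elim: k B' kB => [|k IHk] B' kB maxB'.
  have subBB' : B \subset B' by rewrite -setD_eq0 -cards_eq0 kB.
  have <- : B = B'.
    by apply/eqP; rewrite eqEcard subBB' (basis_card matroidI maxB maxB') leqnn.
  by rewrite setDv big_set0 addr0.
have [x0 x0D] : exists x0, x0 \in B :\: B' by apply/set0Pn; rewrite -card_gt0 kB.
have [x xD xmax] := arg_maxP (fun z => u z - s z) x0D; have {}xD : x \in B :\: B' := xD.
have [y' y'D Ixy'] := basis_exchange matroidI maxB maxB' xD.
have [x' x'D Iy'x'] := basis_exchange matroidI maxB' maxB y'D.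
move: (xD) (y'D) (x'D) => /setDP[xB xB'] /setDP[y'B' y'B] /setDP[x'B _].
have ley' : u y' + s x <= u x.
  rewrite -lerBrDr; apply: le_trans (xmax x' x'D).
  by rewrite lerBrDr; apply: exB.
set B'' := x |: (B' :\ y').
have maxB'' : maxset I B''.
  apply: (@indep_card_basis _ _ matroidI B' B'' maxB' Ixy').
  by rewrite cardsU1 !inE (negbTE xB') andbF (cardsD1 y' B') y'B'.
have defD : B :\: B'' = (B :\: B') :\ x.
  apply/setP=> z; rewrite !inE; case: (eqVneq z x) => //= zx.
  by case: (eqVneq z y') => [->|] //=; rewrite (negbTE y'B) !andbF.
have kB'' : #|B :\: B''| = k.
  by move: kB; rewrite defD (cardsD1 x (B :\: B')) xD add1n => -[].
apply: le_trans (IHk B'' kB'' maxB''); rewrite defD.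
rewrite (big_setD1 x xD) /= [in leRHS]/B'' big_setU1 /=; last first.
  by rewrite !inE (negbTE xB') andbF.
by rewrite (big_setD1 y' y'B') /= addrA lerD2r addrAC lerD2r.
Qed.

End MatroidWeight.

(** * Distances in the exchange graph certify optimality *)

Section ExchangeGraph.
Variables (R : realFieldType) (T : finType) (I1 I2 : pred {set T}).
Variables (B : {set T}) (w : T -> R).

Definition signed_weight (a : T) : R := if a \in B then w a else - w a.

Lemma arc_len_signed a b : is_arc I1 I2 B a b -> arc_len I1 I2 B w a b = signed_weight a.
Proof.
rewrite /is_arc /arc_len /signed_weight.
case: (boolP (arcA1 I1 B a b)) => [/and3P[-> _ _] | _] //= arc2.
by rewrite arc2; case/and3P: arc2 => _ /negbTE->.
Qed.

Lemma arc_sides a b : is_arc I1 I2 B a b -> (a \in B) != (b \in B).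
Proof. by case/orP=> /and3P[aB bB _]; rewrite ?aB ?bB ?(negbTE aB) ?(negbTE bB). Qed.

Hypotheses (matroid1 : is_matroid I1) (matroid2 : is_matroid I2).
Hypothesis basisB : common_basis I1 I2 B.

Lemma delta_optimal_of_distances (delta : R) (d : T -> T -> R) :
  (forall x y, is_arc I1 I2 B x y -> d x y <= arc_len I1 I2 B w x y) ->
  (forall x y z, is_arc I1 I2 B y z -> d x z <= d x y + arc_len I1 I2 B w y z) ->
  (forall x, delta <= d x x) ->
  delta_optimal I1 I2 B delta w.
Proof.
move=> d_arc d_tri d_diag B' /andP[maxB'1 maxB'2] B'B.
case/andP: basisB => maxB1 maxB2.
have [x0 x0D] : exists x0, x0 \in B :\: B'.
  apply/set0Pn; apply: contra B'B; rewrite setD_eq0 => subBB'.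
  by rewrite eq_sym eqEcard subBB' (basis_card matroid1 maxB1 maxB'1) leqnn.
have /setDP[x0B _] := x0D.
pose q v := if v == x0 then 0 else d x0 v.
have q_arc x y : is_arc I1 I2 B x y -> y != x0 -> q y <= q x + signed_weight x.
  move=> xy yx0; rewrite /q (negbTE yx0) -(arc_len_signed xy).
  case: (eqVneq x x0) xy => [-> | _] xy; first by rewrite add0r d_arc.
  exact: d_tri.
pose w1 v := if v \in B then w v + q v else q v.
pose s v := if v == x0 then delta else 0.
have le1 : \sum_(z in B') w1 z + \sum_(z in B :\: B') 0 <= \sum_(z in B) w1 z.
  apply: (@basis_sum_le_exchange _ _ _ matroid1 w1 (fun=> 0)) => // x y xB yB Ixy.
  have yx0 : y != x0 by apply: contraNneq yB => ->.
  have := q_arc x y; rewrite /is_arc /arcA1 xB yB Ixy /signed_weight xB addr0.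
  by rewrite /w1 xB (negbTE yB) addrC; apply.
have le2 : \sum_(z in B') (w z - w1 z) + \sum_(z in B :\: B') s z <=
           \sum_(z in B) (w z - w1 z).
  apply: (@basis_sum_le_exchange _ _ _ matroid2 (fun z => w z - w1 z) s) => // x y xB yB Iyx.
  have yx0 : y != x0 by apply: contraNneq yB => ->.
  have arc : is_arc I1 I2 B y x by rewrite /is_arc /arcA2 xB yB Iyx orbT.
  have sy : signed_weight y = - w y by rewrite /signed_weight (negbTE yB).
  rewrite /w1 xB (negbTE yB) /s.
  case: (eqVneq x x0) arc => [-> | xx0] arc.
    have := d_tri x0 y x0 arc; rewrite (arc_len_signed arc) sy.
    by have := d_diag x0; rewrite /q eqxx (negbTE yx0); lra.
  by have := q_arc y x arc xx0; rewrite sy; lra.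
have sum_s : \sum_(z in B :\: B') s z = delta.
  rewrite (big_setD1 x0 x0D) /= big1 => [|z /setD1P[/negbTE zx0 _]].
    by rewrite /s eqxx addr0.
  by rewrite /s zx0.
move: le1 le2; rewrite big1_eq sum_s !sumrB /wset; lra.
Qed.

End ExchangeGraph.

(** * Shortest walks in a graph without light cycles *)

Lemma split_not_uniq (T : eqType) (s : seq T) : ~~ uniq s ->
  exists s1 a s2 s3, s = s1 ++ a :: s2 ++ a :: s3.
Proof.
elim: s => [|b s IHs] //=; rewrite negb_and negbK => /orP[bs | /IHs[s1 [a [s2 [s3 ->]]]]].
  exists [::], b, (take (index b s) s), (drop (index b s).+1 s) => /=.
  by rewrite -[in LHS](cat_take_drop (index b s) s) (drop_nth b) ?index_mem ?nth_index.
by exists (b :: s1), a, s2, s3.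
Qed.

Section WalkLength.
Variables (R : numDomainType) (T : Type) (lam : T -> R).

Definition walk_len (x : T) (c : seq T) : R := \sum_(v <- belast x c) lam v.

Lemma walk_len_rcons x c z : walk_len x (rcons c z) = walk_len x c + lam (last x c).
Proof. by rewrite /walk_len belast_rcons lastI -cats1 big_cat big_seq1. Qed.

Lemma walk_len_cycle x c : last x c = x -> walk_len x c = \sum_(v <- c) lam v.
Proof.
move=> lastx; apply: (addIr (lam x)).
have := walk_len_rcons x c x; rewrite lastx /walk_len belast_rcons big_cons => <-.
exact: addrC.
Qed.

Lemma walk_len_cut_loop x s1 a s2 s3 :
  walk_len x (s1 ++ a :: s2 ++ a :: s3) =
  walk_len x (s1 ++ a :: s3) + walk_len a (rcons s2 a).
Proof.
rewrite /walk_len belast_rcons !belast_cat /= belast_cat /= [a :: s2]lastI.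
rewrite -cats1 !big_cat /= !big_cons big_cat big_cons big_nil /= addr0 -!addrA.
congr (_ + (_ + _)); by rewrite addrA addrC.
Qed.

End WalkLength.

Section ShortestWalks.
Variables (R : realFieldType) (T : finType) (e : rel T) (lam : T -> R) (delta : R).
Hypothesis delta_ge0 : 0 <= delta.
Hypothesis cycle_len_ge : forall x c, path e x c -> c != [::] -> last x c = x ->
  delta <= \sum_(v <- c) lam v.

Local Notation len := (walk_len lam).

Lemma walk_shorten x c : path e x c -> exists c',
  [/\ path e x c', last x c' = last x c, (size c' <= #|T|)%N,
      (c' == [::]) = (c == [::]) & len x c' <= len x c].
Proof.
have [n] := ubnP (size c); elim: n c => // n IHn c lt_cn pc.
have [le_cT | lt_Tc] := leqP (size c) #|T|; first by exists c.
have /split_not_uniq[s1 [a [s2 [s3 defc]]]] : ~~ uniq c.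
  by apply: contraTN lt_Tc => /card_uniqP <-; rewrite -leqNgt max_card.
move: pc; rewrite defc cat_path /= cat_path /= => /and5P[p1 e1 p2 e2 p3].
have loop_ge : delta <= len a (rcons s2 a).
  rewrite walk_len_cycle ?last_rcons //; apply: (@cycle_len_ge a).
  - by rewrite rcons_path p2 e2.
  - by rewrite -size_eq0 size_rcons.
  - by rewrite last_rcons.
have [||c' [pc' lastc' sizec' nilc' lenc']] := IHn (s1 ++ a :: s3).
- by move: lt_cn; rewrite defc !size_cat /= size_cat /=; lia.
- by rewrite cat_path /= p1 e1 p3.
exists c'; split=> //.
- by rewrite lastc' !last_cat /= last_cat.
- by rewrite nilc'; case: (s1).
- apply: le_trans lenc' _.
  by rewrite walk_len_cut_loop lerDl (le_trans delta_ge0 loop_ge).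
Qed.

Lemma min_walk (Q : T -> T -> bool -> bool) :
  (forall x c, path e x c -> ~~ Q x (last x c) (c == [::])) \/
  exists x0 c0, [/\ path e x0 c0, Q x0 (last x0 c0) (c0 == [::]) &
    forall x c, path e x c -> Q x (last x c) (c == [::]) -> len x0 c0 <= len x c].
Proof.
(* Shortening makes walks with at most #|T| arcs suffice; they form a finite type. *)
pose P (p : T * #|T|.-bseq T) :=
  path e p.1 p.2 && Q p.1 (last p.1 p.2) (p.2 == [::] :> seq T).
have short x c : path e x c -> Q x (last x c) (c == [::]) ->
    exists2 p, P p & len p.1 p.2 <= len x c.
  move=> pc Qc; have [c' [pc' lastc' sizec' nilc' lenc']] := walk_shorten pc.
  by exists (x, Bseq sizec'); rewrite /P /= ?pc' ?lastc' ?nilc'.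
case: (pickP P) => [p0 Pp0 | noP]; [right | left].
  have [p /andP[pp Qp] pmin] := arg_minP (fun p : T * #|T|.-bseq T => len p.1 p.2) Pp0.
  exists p.1, (p.2 : seq T); split=> // x c pc Qc.
  by have [p' Pp' lenp'] := short x c pc Qc; apply: le_trans (pmin p' Pp') lenp'.
move=> x c pc; apply/negP=> Qc.
by have [p Pp _] := short x c pc Qc; rewrite noP in Pp.
Qed.

Lemma exists_potential : exists h : T -> R, forall y z, e y z -> h z <= h y + lam y.
Proof.
have hP z : exists r : R, (exists x c, [/\ path e x c, last x c = z & r = len x c]) /\
    forall x c, path e x c -> last x c = z -> r <= len x c.
  case: (min_walk (fun _ l _ => l == z)) => [/(_ z [::] isT) | [x [c [pc /eqP lc cmin]]]].
    by rewrite eqxx.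
  exists (len x c); split; first by exists x, c.
  by move=> x' c' pc' lc'; apply: cmin; rewrite ?lc'.
have [h /all_and2[hwalk hmin]] := fin_all_exists hP.
exists h => y z yz; have [x [c [pc lc ->]]] := hwalk y.
have := hmin z x (rcons c z); rewrite walk_len_rcons lc; apply.
- by rewrite rcons_path pc lc.
- by rewrite last_rcons.
Qed.

Lemma walk_distances (h : T -> R) : (forall y z, e y z -> h z <= h y + lam y) ->
  exists d : T -> T -> R,
    [/\ forall x y, e x y -> d x y <= lam x,
        forall x y z, e y z -> d x z <= d x y + lam y &
        forall x, delta <= d x x].
Proof.
(* d x z is the length of a shortest nonempty walk from x to z, capped by
   K + h z; the cap keeps d finite when z is unreachable from x and respects
   the triangle inequalities because h is a potential. *)
move=> hpot; pose K := delta + \sum_z `|h z|.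
have K_ge x : delta <= K + h x.
  have hx : 0 <= `|h x| + h x by rewrite -lerBlDr sub0r -normrN ler_norm.
  rewrite /K (bigD1 x) //=; set S := \sum_(z | _) _.
  have : 0 <= S by apply: sumr_ge0.
  lra.
have dP x z : exists r : R, [/\
    forall c, path e x c -> c != [::] -> last x c = z -> r <= len x c,
    r <= K + h z &
    r = K + h z \/ exists c, [/\ path e x c, c != [::], last x c = z & r = len x c]].
  case: (min_walk (fun u l b => [&& u == x, l == z & ~~ b])) => [none | [x0 [c0 []]]].
    exists (K + h z); split=> //; last by left.
    by move=> c pc nc lc; have := none x c pc; rewrite lc !eqxx nc.
  move=> pc0 /and3P[/eqP ex0 /eqP lc0 nc0] cmin; subst x0.
  have cmin' c : path e x c -> c != [::] -> last x c = z -> len x c0 <= len x c.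
    by move=> pc nc lc; apply: cmin; rewrite ?lc ?eqxx ?nc.
  have [le_cK | /ltW lt_Kc] := leP (len x c0) (K + h z).
    by exists (len x c0); split=> //; right; exists c0.
  exists (K + h z); split=> //; last by left.
  by move=> c pc nc lc; apply: le_trans lt_Kc (cmin' c pc nc lc).
have [d dPd] := fin_all_exists (fun x => fin_all_exists (dP x)).
exists d; split.
- move=> x y xy; have [dmin _ _] := dPd x y.
  by have := dmin [:: y]; rewrite /walk_len /= big_seq1 xy; apply.
- move=> x y z yz; have [_ _ [-> | [c [pc nc lc ->]]]] := dPd x y.
    by have [_ dK _] := dPd x z; rewrite -addrA; apply: le_trans dK _; rewrite lerD2l hpot.
  have [dmin _ _] := dPd x z; rewrite -lc -(walk_len_rcons _ _ _ z).
  by apply: dmin; rewrite ?rcons_path ?pc ?lc ?last_rcons //; case: (c).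
- move=> x; have [_ _ [-> | [c [pc nc lc ->]]]] := dPd x x; first exact: K_ge.
  by rewrite walk_len_cycle //; apply: cycle_len_ge pc nc lc.
Qed.

End ShortestWalks.

(** * A shortest light cycle improves B *)

Lemma sum_nat_split (R : nmodType) (f : nat -> R) a b :
  \sum_(0 <= t < a + b) f t = \sum_(0 <= t < a) f t + \sum_(0 <= t < b) f (a + t).
Proof.
elim: b => [|b IHb]; first by rewrite addn0 [in X in _ + X]big_geq // addr0.
by rewrite addnS !big_nat_recr //= ?IHb ?addrA // leq_addr.
Qed.

Section CyclicWalk.
Variables (T : eqType) (e : rel T) (u : T) (c : seq T).
Hypotheses (pc : path e u c) (nc : c != [::]) (lc : last u c = u).

Local Notation n := (size c).

Definition cyc (i : nat) : T := nth u c (i %% n).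

Lemma size_cyc_gt0 : (0 < n)%N. Proof. by case: (c) nc. Qed.

Lemma cyc_mod i : cyc (i %% n) = cyc i. Proof. by rewrite /cyc modn_mod. Qed.

Lemma cyc_addn i : cyc (i + n) = cyc i. Proof. by rewrite /cyc modnDr. Qed.

Lemma cyc_arc i : e (cyc i) (cyc i.+1).
Proof.
have pathc := elimT (pathP u) pc.
have cS : cyc i.+1 = nth u c ((i %% n).+1 %% n) by rewrite /cyc -addn1 -modnDml addn1.
rewrite cS /cyc; have : (i %% n < n)%N by rewrite ltn_mod size_cyc_gt0.
move: (i %% n)%N => j ltjn; have [ltj1n | ] := ltnP j.+1 n.
  by rewrite (modn_small ltj1n); exact: (pathc j.+1 ltj1n).
rewrite leq_eqVlt ltnNge ltjn orbF => /eqP ej; rewrite ej modnn.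
have -> : nth u c j = u by rewrite -[RHS]lc -nth_last ej.
exact: pathc 0 size_cyc_gt0.
Qed.

Lemma path_cyc b m : (0 < m)%N -> e (cyc (b + m)) (cyc b.+1) ->
  path e (cyc (b + m)) (mkseq (fun i => cyc (b.+1 + i)) m).
Proof.
move=> m_gt0 eb; apply/(pathP (cyc b)) => i; rewrite size_mkseq => ltim.
case: i ltim => [|i] ltim /=; first by rewrite nth_mkseq // addn0.
by rewrite !nth_mkseq ?(ltnW ltim) // addnS; apply: cyc_arc.
Qed.

Lemma last_cyc b m : (0 < m)%N ->
  last (cyc (b + m)) (mkseq (fun i => cyc (b.+1 + i)) m) = cyc (b + m).
Proof.
case: m => // m _; rewrite (last_nth (cyc b)) size_mkseq /=.
by rewrite nth_mkseq // addSnnS.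
Qed.

Variables (R : nmodType) (lam : T -> R).

Lemma sum_cyc : \sum_(v <- c) lam v = \sum_(0 <= i < n) lam (cyc i).
Proof.
rewrite (big_nth u) /=; apply: eq_big_nat => i /andP[_ ltin].
by rewrite /cyc modn_small.
Qed.

Lemma sum_cyc_shift q : \sum_(0 <= i < n) lam (cyc (q + i)) = \sum_(v <- c) lam v.
Proof.
elim: q => [|q <-]; first by rewrite sum_cyc.
have en : n = n.-1.+1 by rewrite prednK ?size_cyc_gt0.
have last_q : cyc (q.+1 + n.-1) = cyc q by rewrite addSnnS -en cyc_addn.
rewrite en big_nat_recr //= big_nat_recl //= last_q addrC addn0.
by congr (_ + _); apply: eq_bigr => i _; rewrite addSnnS.
Qed.

End CyclicWalk.

Section ShortestLightCycle.
Variables (R : realFieldType) (T : eqType) (e : rel T) (lam : T -> R) (delta : R).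
Hypothesis delta_ge0 : 0 <= delta.
Variables (u : T) (c : seq T).
Hypotheses (pc : path e u c) (nc : c != [::]) (lc : last u c = u).
Hypothesis shorter_heavy : forall x s, path e x s -> s != [::] -> last x s = x ->
  (size s < size c)%N -> delta <= \sum_(v <- s) lam v.
Hypothesis light : \sum_(v <- c) lam v < delta.

Local Notation n := (size c).
Local Notation v := (cyc u c).

Lemma chord_segment_heavy b m : (0 < m < n)%N -> e (v (b + m)) (v b.+1) ->
  delta <= \sum_(0 <= i < m) lam (v (b.+1 + i)).
Proof.
case/andP=> m_gt0 ltmn eb.
have := shorter_heavy (path_cyc pc nc lc m_gt0 eb) _ (last_cyc u c b m_gt0).
rewrite size_mkseq /mkseq big_map /index_iota subn0; apply=> //.
by rewrite -size_eq0 size_map size_iota -lt0n.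
Qed.

Lemma cyc_inj i j : (i < n)%N -> (j < n)%N -> v i = v j -> i = j.
Proof.
have lt_neq i' j' : (i' < j')%N -> (j' < n)%N -> v i' = v j' -> False.
  move=> ltij ltjn vij.
  have := @chord_segment_heavy i' (j' - i'); rewrite subnKC ?(ltnW ltij) // -vij.
  move=> /(_ ltac:(lia) (cyc_arc pc nc lc i')) heavy1.
  have := @chord_segment_heavy j' (n - (j' - i')).
  have -> : (j' + (n - (j' - i')) = i' + n)%N by lia.
  rewrite cyc_addn vij => /(_ ltac:(lia) (cyc_arc pc nc lc j')) heavy2.
  suff : delta <= \sum_(v <- c) lam v by rewrite leNgt light.
  have en : n = ((j' - i') + (n - (j' - i')))%N by lia.
  rewrite -(sum_cyc_shift u nc lam i'.+1) [in X in \sum_(0 <= _ < X) _]en sum_nat_split.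
  have -> : \sum_(0 <= t < n - (j' - i')) lam (v (i'.+1 + (j' - i' + t))) =
            \sum_(0 <= t < n - (j' - i')) lam (v (j'.+1 + t)).
    by apply: eq_bigr => t _; congr (lam (v _)); lia.
  by rewrite -[delta]addr0 lerD // (le_trans delta_ge0 heavy2).
move=> ltin ltjn vij; case: (ltngtP i j) => // [ltij | ltji].
- by case: (lt_neq i j).
- by case: (lt_neq j i).
Qed.

Definition cyc_prefix (a : nat) : R := \sum_(0 <= t < a.+1) lam (v t).

Lemma chord_prefix_lt i j : (i < n)%N -> (j < n)%N -> i != j -> e (v i) (v j.+1) ->
  ((cyc_prefix j, j) < (cyc_prefix i, i) :> (R *l nat)%type)%O.
Proof.
move=> ltin ltjn ij eij; rewrite ltEprodlexi /=.
case: (ltngtP i j) => [ltij | ltji | eqij]; last by rewrite eqij eqxx in ij.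
- suff ltPji : cyc_prefix j < cyc_prefix i by rewrite (ltW ltPji) leNgt ltPji.
  have := @chord_segment_heavy j (n - j + i).
  have -> : (j + (n - j + i) = i + n)%N by lia.
  rewrite cyc_addn => /(_ ltac:(lia) eij).
  have -> : (n - j + i = (n - j.+1) + i.+1)%N by lia.
  rewrite sum_nat_split.
  have -> : \sum_(0 <= t < i.+1) lam (v (j.+1 + (n - j.+1 + t))) = cyc_prefix i.
    by apply: eq_bigr => t _; rewrite -[v t]cyc_addn; congr (lam (v _)); lia.
  have : \sum_(v <- c) lam v = cyc_prefix j + \sum_(0 <= t < n - j.+1) lam (v (j.+1 + t)).
    by rewrite (sum_cyc u) /cyc_prefix -sum_nat_split subnKC.
  by move: light; lra.
- rewrite ltEnat /= ltji implybT andbT.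
  have := @chord_segment_heavy j (i - j); rewrite subnKC ?(ltnW ltji) //.
  move=> /(_ ltac:(lia) eij) heavy.
  have -> : cyc_prefix i = cyc_prefix j + \sum_(0 <= t < i - j) lam (v (j.+1 + t)).
    by rewrite /cyc_prefix -sum_nat_split; congr (\sum_(0 <= t < _) _); lia.
  by rewrite lerDl (le_trans delta_ge0 heavy).
Qed.

End ShortestLightCycle.

Section LightCycleExchange.
Variables (R : realFieldType) (T : finType) (I1 I2 : pred {set T}).
Variables (B : {set T}) (delta : R) (w : T -> R).
Hypotheses (matroid1 : is_matroid I1) (matroid2 : is_matroid I2).
Hypotheses (basisB : common_basis I1 I2 B) (delta_ge0 : 0 <= delta).

Local Notation e := (is_arc I1 I2 B).
Local Notation lam := (signed_weight B w).

Variables (u : T) (c : seq T).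
Hypotheses (pc : path e u c) (nc : c != [::]) (lc : last u c = u).
Hypothesis shorter_heavy : forall x s, path e x s -> s != [::] -> last x s = x ->
  (size s < size c)%N -> delta <= \sum_(v <- s) lam v.
Hypothesis light : \sum_(v <- c) lam v < delta.

Local Notation n := (size c).
Local Notation v := (cyc u c).

Let arc i : e (v i) (v i.+1) := cyc_arc pc nc lc i.
Let v_inj := cyc_inj delta_ge0 pc nc lc shorter_heavy light.

Lemma cyc_alternates i : (v i.+1 \in B) = (v i \notin B).
Proof. by have := arc_sides (arc i); case: (v i \in B); case: (v i.+1 \in B). Qed.

Lemma cyc_exchange1 i : v i \in B -> I1 (v i.+1 |: (B :\ v i)).
Proof. by move=> viB; case/orP: (arc i) => /and3P[] //; rewrite viB. Qed.

Lemma cyc_exchange2 i : v i \notin B -> I2 (v i |: (B :\ v i.+1)).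
Proof. by move=> viB; case/orP: (arc i) => /and3P[] //; rewrite (negbTE viB). Qed.

Lemma cyc_ord_succ p : exists q : 'I_n, v q = v p.+1.
Proof. by exists (Ordinal (ltn_pmod p.+1 (size_cyc_gt0 nc))); rewrite /= cyc_mod. Qed.

Lemma cyc_ord_pred p : exists q : 'I_n, v q.+1 = v p.
Proof.
exists (Ordinal (ltn_pmod (p + n.-1) (size_cyc_gt0 nc))) => /=.
rewrite -cyc_mod -addn1 modnDml addn1 cyc_mod -addnS prednK ?size_cyc_gt0 //.
exact: cyc_addn.
Qed.

Lemma cyc_ord_inj (J : {set 'I_n}) : {in J &, injective (fun p : 'I_n => v p)}.
Proof. by move=> p q _ _ /v_inj vpq; apply: val_inj; apply: vpq. Qed.

Lemma cyc_ord_succ_inj (J : {set 'I_n}) : {in J &, injective (fun p : 'I_n => v p.+1)}.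
Proof.
move=> p q _ _; rewrite -cyc_mod -[v q.+1]cyc_mod => /v_inj.
rewrite !ltn_mod ?size_cyc_gt0 // => /(_ isT isT) /eqP.
by rewrite -addn1 -[q.+1]addn1 eqn_modDr !modn_small // => /eqP/val_inj.
Qed.

Let J1 := [set p : 'I_n | v p \in B].
Let J2 := [set p : 'I_n | v p \notin B].
Let X := [set v p | p : 'I_n in J1].
Let Y := [set v p.+1 | p : 'I_n in J1].

Let X_J2 : X = [set v p.+1 | p : 'I_n in J2].
Proof.
apply/setP=> z; apply/imsetP/imsetP => [[p pJ1 ->] | [q qJ2 ->]].
  have [q vq] := cyc_ord_pred p; exists q => //.
  by move: pJ1; rewrite !inE -vq cyc_alternates.
have [p vp] := cyc_ord_succ q; exists p => //.
by move: qJ2; rewrite !inE vp cyc_alternates.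
Qed.

Let Y_J2 : Y = [set v p | p : 'I_n in J2].
Proof.
apply/setP=> z; apply/imsetP/imsetP => [[p pJ1 ->] | [q qJ2 ->]].
  have [q vq] := cyc_ord_succ p; exists q => //.
  by move: pJ1; rewrite !inE vq cyc_alternates negbK.
have [p vp] := cyc_ord_pred q; exists p => //.
by move: qJ2; rewrite !inE -vp cyc_alternates negbK.
Qed.

(* Prefix lengths, ties broken by position, order the exchange pairs along c. *)
Let key (p : 'I_n) : R *l nat := (cyc_prefix lam u c p, val p).

Let key_lt (i j : 'I_n) : i != j -> e (v i) (v j.+1) -> (key j < key i)%O.
Proof.
by move=> ij; apply: (chord_prefix_lt delta_ge0 pc nc lc shorter_heavy light) => //.
Qed.

Lemma cyc_indep1 : I1 ((B :\: X) :|: Y).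
Proof.
case/andP: basisB => /maxsetp IB _.
apply: (indep_unique_matching matroid1 (key := key)) => //.
- by move=> j; rewrite inE.
- by move=> j; rewrite inE cyc_alternates => ->.
- exact: cyc_ord_inj.
- exact: cyc_ord_succ_inj.
- by move=> j; rewrite inE; apply: cyc_exchange1.
move=> i j; rewrite !inE => viB vjB ij Iji; apply: key_lt => //.
by rewrite /is_arc /arcA1 viB cyc_alternates vjB Iji.
Qed.

Lemma cyc_indep2 : I2 ((B :\: X) :|: Y).
Proof.
case/andP: basisB => _ /maxsetp IB; rewrite X_J2 Y_J2.
apply: (indep_unique_matching matroid2 (key := fun p => key p : (R *l nat)^d)) => //.
- by move=> j; rewrite inE cyc_alternates.
- by move=> j; rewrite inE.
- exact: cyc_ord_succ_inj.
- exact: cyc_ord_inj.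
- by move=> j; rewrite inE; apply: cyc_exchange2.
move=> i j; rewrite !inE => viB vjB ij Iij; rewrite ltEdual; apply: key_lt.
  by rewrite eq_sym.
by rewrite /is_arc /arcA2 cyc_alternates viB vjB Iij orbT.
Qed.

Let Y_notin_B z : z \in Y -> z \notin B.
Proof. by case/imsetP=> p; rewrite inE => vpB ->; rewrite cyc_alternates vpB. Qed.

Let sum_cyc_XY : \sum_(x <- c) lam x = \sum_(z in X) w z - \sum_(z in Y) w z.
Proof.
rewrite (sum_cyc u) big_mkord (bigID (fun p : 'I_n => v p \in B)) /=.
rewrite (big_imset _ (@cyc_ord_inj J1)) /= Y_J2 (big_imset _ (@cyc_ord_inj J2)) /= -sumrN.
congr (_ + _); apply: eq_big => p; rewrite ?inE // => vpB.
  by rewrite /signed_weight vpB.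
by rewrite /signed_weight (negbTE vpB).
Qed.

Lemma light_cycle_not_optimal : ~ delta_optimal I1 I2 B delta w.
Proof.
move=> opt; case/andP: basisB => maxB1 maxB2.
set B' := (B :\: X) :|: Y.
have subXB : X \subset B by apply/subsetP=> z /imsetP[p]; rewrite inE => vpB ->.
have B'IB : B' :&: B = B :\: X.
  apply/setP=> z; rewrite !inE; case: (boolP (z \in Y)) => [/Y_notin_B/negbTE-> | _].
    by rewrite !andbF.
  by rewrite orbF -andbA andbb.
have B'DB : B' :\: B = Y.
  apply/setP=> z; rewrite !inE; case: (boolP (z \in Y)) => [zY | /negbTE zY].
    by rewrite orbT (Y_notin_B zY).
  by rewrite orbF andbCA andNb andbF.
have cardB' : #|B'| = #|B|.
  rewrite -(cardsID B B') B'IB B'DB -(cardsID X B) (setIidPr subXB).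
  by rewrite (card_in_imset (@cyc_ord_inj J1)) (card_in_imset (@cyc_ord_succ_inj J1)) addnC.
have basisB' : common_basis I1 I2 B'.
  apply/andP; split; first exact: (indep_card_basis matroid1 maxB1 cyc_indep1).
  exact: (indep_card_basis matroid2 maxB2 cyc_indep2).
have B'neB : B' != B.
  apply/eqP=> eqB'B; pose p0 : 'I_n := Ordinal (size_cyc_gt0 nc).
  have [v0B | v0B] := boolP (v p0 \in B).
    have v0X : v p0 \in X by apply/imsetP; exists p0; rewrite ?inE.
    have : v p0 \in B' by rewrite eqB'B.
    by rewrite /B' !inE v0X /= => /Y_notin_B; rewrite v0B.
  have v0Y : v p0 \in Y by rewrite Y_J2; apply/imsetP; exists p0; rewrite ?inE.
  by move: v0B; rewrite -eqB'B /B' !inE v0Y orbT.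
have := opt B' basisB' B'neB.
rewrite /wset (big_setID B) [in X in _ <= X](big_setID X) /= B'IB B'DB (setIidPr subXB).
move=> le_opt.
suff : delta <= \sum_(x <- c) lam x by rewrite leNgt light.
by rewrite sum_cyc_XY; lra.
Qed.

End LightCycleExchange.

Lemma optimal_cycle_heavy (R : realFieldType) (T : finType) (I1 I2 : pred {set T})
    (B : {set T}) (delta : R) (w : T -> R) :
  is_matroid I1 -> is_matroid I2 -> common_basis I1 I2 B -> 0 <= delta ->
  delta_optimal I1 I2 B delta w ->
  forall x c, path (is_arc I1 I2 B) x c -> c != [::] -> last x c = x ->
    delta <= \sum_(v <- c) signed_weight B w v.
Proof.
move=> matroid1 matroid2 basisB delta_ge0 opt x c.
have [k] := ubnP (size c); elim: k x c => // k IHk x c ltck pc nc lc.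
rewrite leNgt; apply/negP=> light.
apply: (light_cycle_not_optimal matroid1 matroid2 basisB delta_ge0 pc nc lc _ light opt).
by move=> y s ps ns ls ltsc; apply: (IHk y) => //; lia.
Qed.

Unset Implicit Arguments.

Theorem mainTheorem4 (R : realFieldType) (T : finType)
  (I1 I2 : pred {set T}) (B : {set T}) (delta : R) (w : T -> R) :
  is_matroid I1 -> is_matroid I2 -> common_basis I1 I2 B ->
  0 <= delta -> (forall x, 0 <= w x) ->
  delta_optimal I1 I2 B delta w <->
  exists d : T -> T -> R,
    [/\ (forall x y, is_arc I1 I2 B x y -> d x y <= arc_len I1 I2 B w x y),
        (forall x y z, is_arc I1 I2 B y z -> d x z <= d x y + arc_len I1 I2 B w y z) &
        (forall x, delta <= d x x)].
Proof.
move=> matroid1 matroid2 basisB delta_ge0 _.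
split=> [opt | [d [d_arc d_tri d_diag]]]; last first.
  exact (delta_optimal_of_distances matroid1 matroid2 basisB d_arc d_tri d_diag).
have heavy := optimal_cycle_heavy matroid1 matroid2 basisB delta_ge0 opt.
have [h hpot] := exists_potential delta_ge0 heavy.
have [d [d_arc d_tri d_diag]] := walk_distances delta_ge0 heavy hpot.
exists d; split=> // [x y xy | x y z yz]; rewrite arc_len_signed //.
- exact: d_arc.
- exact: d_tri.
Qed.
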